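(* Let $\mathcal{R}$ be a set of rules on a finite set $Q$. For every critical rule $(A,q)$ of the antimatroid $\mathcal{A}(\mathcal{R})$, there exists a rule $(A',q)\in\mathcal{R}$ with $A\subseteq A'$.
   Context: A rule on $Q$ is a pair $(A,q)$ with $A\subseteq Q$, $q\in Q$; it accepts $Y\subseteq Q$ if $q\in Y$ implies $Y\cap A\neq\emptyset$. $\mathcal{K}(\mathcal{R})$ is the family of subsets accepted by all rules of $\mathcal{R}$, and $\mathcal{A}(\mathcal{R})$ is the family of $K\in\mathcal{K}(\mathcal{R})$ for which there is a sequence $\emptyset=Y_0\subseteq\dots\subseteq Y_k=K$ of members of $\mathcal{K}(\mathcal{R})$ with $|Y_{i+1}\setminus Y_i|=1$; it is an antimatroid. For an antimatroid $\mathcal{A}$ on $Q$, let $\mathcal{A}^*=\{Q\setminus X: X\in\mathcal{A}\}$ and $\tau(X)=\bigcap\{Y\in\mathcal{A}^*: X\subseteq Y\}$. A rule $(A,q)$ with $q\notin A$ is critical for $\mathcal{A}$ if, with $C=A\cup\{q\}$, $\tau(C)\setminus\{q\}\notin\mathcal{A}^*$ and $\tau(C)\setminus\{q,s\}\in\mathcal{A}^*$ for every $s\in A$. *)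

From mathcomp Require Import all_boot.
From mathcomp Require Import fintype finset path tuple.
Set Implicit Arguments. Unset Strict Implicit. Unset Printing Implicit Defensive.

Section Rules.
Variable Q : finType.

Definition rule := ({set Q} * Q)%type.

Definition accepts (r : rule) (Y : {set Q}) : bool :=
  (r.2 \in Y) ==> (Y :&: r.1 != set0).

Definition Kfam (R : {set rule}) : {set {set Q}} :=
  [set Y : {set Q} | [forall r in R, accepts r Y]].

Definition step (Y Y' : {set Q}) : bool := (Y \subset Y') && (#|Y' :\: Y| == 1).

(* A(R): members K of K(R) reachable from the empty set by a chain of
   members of K(R), each obtained from the previous one by adding one element. *)
Definition Afam (R : {set rule}) : {set {set Q}} :=
  [set K in Kfam R | [exists s : (#|Q|).-tuple {set Q}, exists n : 'I_(#|Q|.+1),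
     let ch := take n s in
     [&& all (fun Y => Y \in Kfam R) ch,
         path step set0 ch & last set0 ch == K]]].

Definition dualfam (F : {set {set Q}}) : {set {set Q}} := [set ~: X | X in F].

Definition tau (F : {set {set Q}}) (X : {set Q}) : {set Q} :=
  \bigcap_(Y in dualfam F | X \subset Y) Y.

Definition critical (F : {set {set Q}}) (r : rule) : Prop :=
  let C := r.2 |: r.1 in
  [/\ r.2 \notin r.1,
      tau F C :\ r.2 \notin dualfam F &
      forall s, s \in r.1 -> tau F C :\: [set r.2; s] \in dualfam F].

End Rules.

From mathcomp Require Import all_boot.
Set Implicit Arguments. Unset Strict Implicit. Unset Printing Implicit Defensive.

(* Let T := tau (q |: A) and U := ~: T. Since A(R) is closed under
   unions, U is the largest feasible set avoiding q |: A, and criticality says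
   that q |: U is not feasible while s |: q |: U is feasible for every s in A.
   As U is feasible, q |: U can only fail to be feasible because some rule
   (B, q) of R rejects it, i.e. B misses q |: U. Each feasible s |: q |: U is
   accepted by (B, q), so B meets it, necessarily in s: hence A \subset B. *)

Lemma mem_dualfam (T : finType) (F : {set {set T}}) (X : {set T}) :
  (X \in dualfam F) = (~: X \in F).
Proof.
apply/imsetP/idP => [[Y YF ->]|XF]; first by rewrite setCK.
by exists (~: X); rewrite ?setCK.
Qed.

Section Antimatroid.
Variables (Q : finType) (R : {set rule Q}).

Inductive reachable : {set Q} -> Prop :=
| reachable0 : reachable set0
| reachableS Y Z : reachable Y -> Z \in Kfam R -> step Y Z -> reachable Z.

Lemma Kfam_accepts Y r : Y \in Kfam R -> r \in R -> accepts r Y.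
Proof. by rewrite inE => /forallP/(_ r)/implyP. Qed.

Lemma set0_Kfam : set0 \in Kfam R.
Proof. by rewrite inE; apply/forall_inP => r _; rewrite /accepts inE. Qed.

Lemma Kfam_setU U V : U \in Kfam R -> V \in Kfam R -> U :|: V \in Kfam R.
Proof.
move=> KU KV; rewrite inE; apply/forall_inP => r rR.
move: (Kfam_accepts KU rR) (Kfam_accepts KV rR) => /implyP hU /implyP hV.
apply/implyP; rewrite setIUl setU_eq0 negb_and in_setU.
by case/orP => [/hU|/hV] ->; rewrite ?orbT.
Qed.

Lemma reachable_Kfam Y : reachable Y -> Y \in Kfam R.
Proof. by case=> [|Y' Z _ KZ _] //; exact: set0_Kfam. Qed.

Lemma reachable_setU1 V x : reachable V -> x |: V \in Kfam R -> reachable (x |: V).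
Proof.
move=> rV KxV; have [xV|xV] := boolP (x \in V); first by rewrite (setUidPr _) ?sub1set.
apply: reachableS rV KxV _; rewrite /step subsetUr cardsDS ?subsetUr //.
by rewrite cardsU1 xV addnK.
Qed.

Lemma reachable_setU U V : reachable U -> reachable V -> reachable (U :|: V).
Proof.
move=> rU; elim=> [|Y Z _ rUY KZ /andP [sYZ /cards1P [x DZ]]]; first by rewrite setU0.
have DZ' : Z = x |: Y by rewrite -(setID Z Y) (setIidPr sYZ) DZ setUC.
have DUZ : U :|: Z = x |: (U :|: Y) by rewrite DZ' setUCA.
rewrite DUZ; apply: reachable_setU1 => //.
by rewrite -DUZ; apply: Kfam_setU => //; exact: reachable_Kfam.
Qed.

Lemma card_step (Y Z : {set Q}) : step Y Z -> #|Z| = #|Y|.+1.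
Proof.
move=> /andP [sYZ /eqP]; rewrite cardsDS // => D.
by rewrite -(subnK (subset_leq_card sYZ)) D.
Qed.

Lemma reachable_path (Y : {set Q}) ch :
  reachable Y -> all (mem (Kfam R)) ch -> path (@step Q) Y ch -> reachable (last Y ch).
Proof.
elim: ch Y => [|Z ch IH] Y rY //= /andP [KZ Kch] /andP [sYZ pZ].
exact: IH (reachableS rY KZ sYZ) Kch pZ.
Qed.

Lemma reachable_chain K : reachable K -> exists ch : seq {set Q},
  [/\ all (mem (Kfam R)) ch, path (@step Q) set0 ch, last set0 ch = K & size ch = #|K|].
Proof.
elim=> [|Y Z _ [ch [Kch pch lch sch]] KZ sYZ]; first by exists [::]; rewrite cards0.
exists (rcons ch Z); rewrite all_rcons rcons_path last_rcons size_rcons lch.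
by split; rewrite ?Kch ?pch ?sYZ ?sch ?(card_step sYZ) ?andbT.
Qed.

Lemma AfamP K : reflect (reachable K) (K \in Afam R).
Proof.
apply: (iffP idP) => [|rK].
  rewrite inE => /andP [_ /existsP [s /existsP [n /and3P [Kch pch /eqP <-]]]].
  exact: reachable_path reachable0 Kch pch.
rewrite inE reachable_Kfam //=.
have [ch [Kch pch lch sch]] := reachable_chain rK.
have ltn_ch : size ch < #|Q|.+1 by rewrite ltnS sch max_card.
have size_pad : size (ch ++ nseq (#|Q| - size ch) set0) == #|Q|.
  by rewrite size_cat size_nseq subnKC // -ltnS.
apply/existsP; exists (Tuple size_pad); apply/existsP; exists (Ordinal ltn_ch).
by rewrite /= take_size_cat // Kch pch lch eqxx.
Qed.

Lemma Afam_Kfam K : K \in Afam R -> K \in Kfam R.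
Proof. by rewrite inE => /andP []. Qed.

Lemma Afam_setU1 V x : V \in Afam R -> x |: V \in Kfam R -> x |: V \in Afam R.
Proof. by move=> /AfamP rV KxV; apply/AfamP; exact: reachable_setU1. Qed.

Lemma setC_tau_Afam X : ~: tau (Afam R) X \in Afam R.
Proof.
apply/AfamP; rewrite /tau setC_bigcap.
apply: big_ind => [|U V|Y /andP [DY _]]; [exact: reachable0 | exact: reachable_setU |].
by apply/AfamP; rewrite -mem_dualfam.
Qed.

Lemma blocking_rule U q : U \in Afam R -> q |: U \notin Afam R ->
  exists2 B, (B, q) \in R & [disjoint B & q |: U].
Proof.
move=> UA qUA; have : q |: U \notin Kfam R by apply: contra qUA; exact: Afam_setU1.
rewrite inE => /forall_inPn [[B p] pR]; rewrite /accepts negb_imply negbK /=.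
case/andP => pqU /eqP qUB.
suff pq : p = q by exists B; [rewrite -pq | rewrite -setI_eq0 setIC qUB].
move: pqU; rewrite in_setU1 => /orP [/eqP //|pU].
have := Kfam_accepts (Afam_Kfam UA) pR; rewrite /accepts pU.
case/set0Pn => y /setIP [yU yB].
have : y \in (q |: U) :&: B by rewrite !inE yU yB orbT.
by rewrite qUB inE.
Qed.

End Antimatroid.

Theorem lemma3p6 (Q : finType) (R : {set rule Q}) (A : {set Q}) (q : Q) :
  critical (Afam R) (A, q) ->
  exists A' : {set Q}, (A', q) \in R /\ A \subset A'.
Proof.
case=> /= _ notT sT; set T := tau (Afam R) (q |: A) in notT sT.
have qUA : q |: ~: T \notin Afam R by move: notT; rewrite mem_dualfam setCD setUC.
have [B qBR dB] := blocking_rule (setC_tau_Afam R (q |: A)) qUA.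
exists B; split=> //; apply/subsetP => s sA.
have KsqU : s |: (q |: ~: T) \in Kfam R.
  apply: Afam_Kfam; move: (sT s sA).
  by rewrite mem_dualfam setCD setUA setUC [~: T :|: _]setUC.
have := Kfam_accepts KsqU qBR; rewrite /accepts /= !in_setU1 eqxx orbT /=.
case/set0Pn => y /setIP [+ yB]; rewrite in_setU1 => /orP [/eqP <- //|yqU].
by rewrite (disjointFr dB yB) in yqU.
Qed.
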